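(* The set of supports of the codewords of weight $6$ of the extended binary Hamming code of length $16$, viewed as $6$-element subsets of $\{1,\dots,16\}$, is a completely regular code in the Johnson graph $J(16,6)$ with covering radius $2$.
   Context: The Johnson graph $J(n,k)$ has as vertices the $k$-element subsets of $\{1,\dots,n\}$, adjacent iff they meet in $k-1$ elements. The extended binary Hamming code of length $16$ is the $[16,11,4]$ binary code obtained from the binary Hamming code of length $15$ by adding an overall parity bit. For a nonempty vertex set $C$ of a connected regular graph, $C_i$ is the set of vertices at distance exactly $i$ from $C$, the covering radius is the largest $i$ with $C_i\neq\emptyset$, and $C$ is completely regular if there are numbers $\gamma_i,\alpha_i,\beta_i$ such that every vertex of $C_i$ has exactly $\gamma_i$ neighbours in $C_{i-1}$, $\alpha_i$ in $C_i$, $\beta_i$ in $C_{i+1}$, for all $i$. *)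

From mathcomp Require Import all_boot all_order all_algebra.
Set Implicit Arguments. Unset Strict Implicit. Unset Printing Implicit Defensive.
Import GRing.Theory.
Local Open Scope ring_scope.

Fixpoint walkn (V : finType) (e : rel V) (n : nat) (x y : V) : bool :=
  if n is m.+1 then [exists z, e x z && walkn e m z y] else x == y.

(* For an irreflexive relation, the set of vertices at distance exactly i
   from C: some walk of length i reaches C, none of smaller length does. *)
Definition layer (V : finType) (e : rel V) (C : {set V}) (i : nat) : {set V} :=
  [set v | [exists c in C, walkn e i v c] &&
           [forall j : 'I_i, ~~ [exists c in C, walkn e j v c]]].

Definition layer_below (V : finType) (e : rel V) (C : {set V}) (i : nat) : {set V} :=
  if i is j.+1 then layer e C j else set0.

Definition completely_regular (V : finType) (e : rel V) (C : {set V}) : Prop :=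
  C != set0 /\
  exists gamma alpha beta : nat -> nat,
    forall i (v : V), v \in layer e C i ->
      [/\ #|[set u | e v u & u \in layer_below e C i]| = gamma i,
          #|[set u | e v u & u \in layer e C i]| = alpha i &
          #|[set u | e v u & u \in layer e C i.+1]| = beta i].

Definition covering_radius_is (V : finType) (e : rel V) (C : {set V}) (r : nat) : Prop :=
  layer e C r != set0 /\ forall i : nat, (r < i)%N -> layer e C i = set0.

Definition jvert (n k : nat) := {A : {set 'I_n} | #|A| == k}.

Definition johnson_adj (n k : nat) : rel (jvert n k) :=
  fun A B => #|val A :&: val B| == k.-1.

(* Parity-check matrix of the binary Hamming code of length 15:
   column j is the binary representation of j+1. *)
Definition hamH : 'M['F_2]_(4, 15) :=
  \matrix_(k < 4, j < 15) (odd ((j.+1) %/ 2 ^ k))%:R.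

Definition hamming15 : {set 'rV['F_2]_15} := [set x | hamH *m x^T == 0].

Definition extend_parity (x : 'rV['F_2]_15) : 'rV['F_2]_16 :=
  row_mx x (\row_(j < 1) \sum_(i < 15) x 0 i).

Definition ext_hamming16 : {set 'rV['F_2]_16} :=
  [set extend_parity x | x in hamming15].

Definition supp (c : 'rV['F_2]_16) : {set 'I_16} := [set i | c 0 i != 0].

Definition weight6_supports : {set jvert 16 6} :=
  [set A : jvert 16 6 | [exists c in ext_hamming16, supp c == val A]].

From mathcomp Require Import all_boot all_order all_algebra zify.
Set Implicit Arguments. Unset Strict Implicit. Unset Printing Implicit Defensive.
Import GRing.Theory.

(* Generically, if a
   function d on the vertices of a graph vanishes exactly on C, decreases by
   one along some edge at every vertex outside C, and increases by at most one
   along every edge, then d is the distance to C, so the layers C_i are the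
   level sets of d.  If furthermore the number of neighbours of v at level k
   only depends on (d v, k), then C is completely regular, and its covering
   radius is the largest value of d.

   For J(16,6) we encode 6-subsets as 16-bit words: a neighbour A - a + b of A
   becomes a bit swap, and membership in C becomes the Hamming parity checks
   on the bits.  The candidate distance (0 on the code, 1 next to it, 2
   elsewhere) is tabulated in binary tries over all 2^16 words, and one
   evaluation by vm_compute checks the neighbour-count table at every weight-6
   word.  The table also forces the descent and Lipschitz properties of d and
   shows that all three levels 0, 1, 2 occur. *)

Section DistanceFunction.

Variables (V : finType) (e : rel V) (C : {set V}) (d : V -> nat).

Hypothesis d_eq0 : forall v, (d v == 0) = (v \in C).
Hypothesis d_descent : forall v, 0 < d v -> exists2 u, e v u & (d u).+1 = d v.
Hypothesis d_lipschitz : forall v u, e v u -> d v <= (d u).+1.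

Lemma walk_dist_le j v : [exists c in C, walkn e j v c] -> d v <= j.
Proof.
elim: j v => [|j IH] v /existsP [c /andP [cC]] /=.
  by move/eqP->; rewrite leqn0 d_eq0.
case/existsP=> z /andP [evz wzc]; apply: leq_trans (d_lipschitz evz) _.
by rewrite ltnS; apply: IH; apply/existsP; exists c; rewrite cC.
Qed.

(* Following descending edges gives a walk of length exactly d v into C. *)
Lemma walk_of_dist v : [exists c in C, walkn e (d v) v c].
Proof.
suff walk_n n : forall u, d u = n -> [exists c in C, walkn e n u c] by exact: walk_n.
elim: n => [|n IH] {}v dv.
  by apply/existsP; exists v; rewrite -d_eq0 dv /=.
have [|u evu du] := @d_descent v; first by rewrite dv.
have /existsP [c /andP [cC wuc]] := IH u (succn_inj (etrans du dv)).
by apply/existsP; exists c; rewrite cC /=; apply/existsP; exists u; rewrite evu.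
Qed.

Lemma layer_dist i : layer e C i = [set v | d v == i].
Proof.
apply/setP => v; rewrite !inE; apply/andP/eqP => [[wi /forallP none] | <-].
  have [lt|gt|//] := ltngtP (d v) i.
    by have := none (Ordinal lt); rewrite walk_of_dist.
  by move: gt; rewrite ltnNge (walk_dist_le wi).
split; first exact: walk_of_dist.
by apply/forallP => j; apply/negP => /walk_dist_le; rewrite leqNgt ltn_ord.
Qed.

Lemma completely_regular_of_table (tab : nat -> nat -> nat) :
  C != set0 ->
  (forall v k, #|[set u | e v u & d u == k]| = tab (d v) k) ->
  completely_regular e C.
Proof.
move=> C_n0 dtab; split=> //.
have nbrs_in_layer v j : #|[set u | e v u & u \in layer e C j]| = tab (d v) j.
  by rewrite -dtab layer_dist; apply: eq_card => u; rewrite !inE.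
exists (fun i => if i is j.+1 then tab i j else 0), (fun i => tab i i),
       (fun i => tab i i.+1).
move=> i v vi; have /eqP dv : d v == i by move: vi; rewrite layer_dist inE.
rewrite !nbrs_in_layer dv; split=> //; case: i dv {vi} => [|j] dv /=.
  by apply/eqP; rewrite cards_eq0; apply/eqP/setP => u; rewrite !inE andbF.
by rewrite nbrs_in_layer dv.
Qed.

Lemma covering_radius_of_dist r :
  (exists v, d v = r) -> (forall v, d v <= r) -> covering_radius_is e C r.
Proof.
move=> [v dv] d_le; split.
  by apply/set0Pn; exists v; rewrite layer_dist inE dv.
move=> i ri; apply/setP => u; rewrite layer_dist !inE.
by rewrite ltn_eqF // (leq_ltn_trans (d_le u) ri).
Qed.

End DistanceFunction.

Section JohnsonNeighbours.

Variables n k : nat.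
Hypothesis k_gt0 : 0 < k.

(* The set A - a + b; for a in A and b outside A these are the neighbours of A. *)
Definition exchange (A : {set 'I_n}) (a b : 'I_n) : {set 'I_n} := A :\ a :|: [set b].

Lemma in_exchange (A : {set 'I_n}) (a b x : 'I_n) :
  (x \in exchange A a b) = (x == b) || (x != a) && (x \in A).
Proof. by rewrite !inE orbC. Qed.

Lemma exchange_meet (A : {set 'I_n}) (a b : 'I_n) :
  b \notin A -> A :&: exchange A a b = A :\ a.
Proof.
move=> bA; apply/setP => x; rewrite in_setI in_exchange in_setD1.
have [->|_] := eqVneq x b; first by rewrite (negbTE bA) andbF.
by rewrite orFb andbCA andbb.
Qed.

Lemma card_exchange (A : {set 'I_n}) (a b : 'I_n) :
  a \in A -> b \notin A -> #|exchange A a b| = #|A|.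
Proof.
move=> aA bA; rewrite /exchange setUC cardsU1 !inE negb_and negbK bA orbT.
by rewrite (cardsD1 a A) aA.
Qed.

Lemma exchange_inj (A : {set 'I_n}) (a b a' b' : 'I_n) :
  a \in A -> b \notin A -> a' \in A -> b' \notin A ->
  exchange A a b = exchange A a' b' -> a = a' /\ b = b'.
Proof.
move=> aA bA aA' bA' E.
have /eqP eb : b == b'.
  by move/setP/(_ b): E; rewrite !in_exchange eqxx (negbTE bA) !andbF !orbF => <-.
have nab : a != b by apply: contraNneq bA => <-.
split=> //; apply/eqP; move/setP/(_ a): E; rewrite !in_exchange eqxx aA -eb.
by rewrite (negbTE nab) /= !andbT => /esym/negbFE.
Qed.

Lemma card_jvert (v : jvert n k) : #|val v| = k.
Proof. exact/eqP/(valP v). Qed.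

Lemma exchange_of_adj (v u : jvert n k) : johnson_adj v u ->
  exists a b, [/\ a \in val v, b \notin val v & val u = exchange (val v) a b].
Proof.
rewrite /johnson_adj => /eqP meet; set S := val v; set U := val u.
have k_sub_pred : k - k.-1 = 1 by rewrite -{1}(prednK k_gt0) subSnn.
have /cards1P [a Da] : #|S :\: U| == 1 by rewrite cardsD card_jvert meet k_sub_pred.
have /cards1P [b Db] : #|U :\: S| == 1.
  by rewrite cardsD card_jvert setIC meet k_sub_pred.
have /setDP [aS aU] : a \in S :\: U by rewrite Da set11.
have /setDP [bU bS] : b \in U :\: S by rewrite Db set11.
exists a, b; split=> //; apply/setP => x; rewrite in_exchange.
have [xS|xS] := boolP (x \in S).
  have : (x \in S :\: U) = (x == a) by rewrite Da inE.
  rewrite in_setD xS andbT => <-; rewrite negbK.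
  have [xb|_] := eqVneq x b; last by rewrite andbT.
  by move: bS; rewrite -xb xS.
have : (x \in U :\: S) = (x == b) by rewrite Db inE.
rewrite in_setD xS /= => ->.
by rewrite andbF orbF.
Qed.

Lemma card_johnson_nbrs (v : jvert n k) (P : pred {set 'I_n}) :
  #|[set u | johnson_adj v u & P (val u)]| =
  #|[set p : 'I_n * 'I_n |
      [&& p.1 \in val v, p.2 \notin val v & P (exchange (val v) p.1 p.2)]]|.
Proof.
set S := val v; set D := [set p : 'I_n * 'I_n | _].
pose g (p : 'I_n * 'I_n) : jvert n k := insubd v (exchange S p.1 p.2).
have gE p : p \in D -> val (g p) = exchange S p.1 p.2.
  rewrite inE => /and3P [p1S p2S _].
  by rewrite insubdK // unfold_in card_exchange // card_jvert.
rewrite -(card_in_imset (f := g)); last first.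
  move=> p q pD qD /(congr1 val); rewrite !gE // => E.
  move: pD qD; rewrite !inE => /and3P [p1S p2S _] /and3P [q1S q2S _].
  by case: (exchange_inj p1S p2S q1S q2S E); case: p q {E p1S p2S q1S q2S} => ? ? [? ?] /= -> ->.
congr #|pred_of_set _|; apply/setP => u; rewrite inE; apply/andP/imsetP.
  case=> /[dup] adj /exchange_of_adj [a [b [aS bS uE]]] Pu.
  have abD : (a, b) \in D by rewrite inE /= aS bS -uE.
  by exists (a, b) => //; apply: val_inj; rewrite gE.
case=> p pD ->; move: (pD); rewrite inE gE // => /and3P [p1S p2S Pp]; split=> //.
have meet : #|S :\ p.1| = k.-1.
  by move: (cardsD1 p.1 S); rewrite p1S card_jvert => ->.
by rewrite /johnson_adj gE // exchange_meet // meet.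
Qed.

End JohnsonNeighbours.



Lemma count_flatten_pairs (T : Type) (m : nat) (p q : pred nat) (g : nat -> nat -> T)
    (P : pred T) :
  count P (flatten [seq [seq g a b | b <- iota 0 m & q b] | a <- iota 0 m & p a]) =
  #|[set x : 'I_m * 'I_m | [&& p x.1, q x.2 & P (g x.1 x.2)]]|.
Proof.
rewrite count_flatten sumnE !big_map big_filter cardsE -sum1_card.
rewrite -(pair_big_dep (fun a : 'I_m => p a) (fun (a b : 'I_m) => q b && P (g a b))
                       (fun _ _ => 1)).
rewrite -(big_mkord p (fun a => \sum_(b < m | q b && P (g a b)) 1)) /index_iota subn0.
apply: eq_bigr => a _; rewrite count_map -sum1_count big_filter_cond.
by rewrite -(big_mkord (fun b => q b && P (g a b)) (fun=> 1)) /index_iota subn0.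
Qed.

(* swap bs a b sets bit b and clears bit a of the word bs.  The recursion
   shifts positions by one so that 0 marks a position already passed; it is
   linear in the length, which matters for the exhaustive check below. *)
Fixpoint swap_at (bs : seq bool) (a b : nat) : seq bool :=
  if bs is x :: r then
    (if b is 1 then true else if a is 1 then false else x) :: swap_at r a.-1 b.-1
  else [::].

Definition swap (bs : seq bool) (a b : nat) : seq bool := swap_at bs a.+1 b.+1.

Lemma size_swap bs a b : size (swap bs a b) = size bs.
Proof. by rewrite /swap; elim: bs a.+1 b.+1 => //= x r IH a' b'; rewrite IH. Qed.

Lemma nth_swap bs a b i : i < size bs ->
  nth false (swap bs a b) i = (i == b) || (i != a) && nth false bs i.
Proof.
rewrite /swap -[i == b]eqSS -[i == a]eqSS.
elim: bs a.+1 b.+1 i => [|x r IH] a' b' [|i] //= hi.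
  by case: a' b' => [|[|a']] [|[|b']].
by rewrite IH //; case: a' b' => [|a'] [|b'].
Qed.

Definition nbrs (bs : seq bool) : seq (seq bool) :=
  flatten [seq [seq swap bs a b | b <- iota 0 (size bs) & ~~ nth false bs b]
          | a <- iota 0 (size bs) & nth false bs a].

Section Words.

Variable n : nat.

Definition word_of (A : {set 'I_n}) : seq bool := [seq i \in A | i <- enum 'I_n].

Lemma size_word_of A : size (word_of A) = n.
Proof. by rewrite size_map size_enum_ord. Qed.

Lemma nth_word_of A (i : 'I_n) : nth false (word_of A) i = (i \in A).
Proof. by rewrite (nth_map i) ?size_enum_ord // nth_ord_enum. Qed.

Lemma count_word_of A : count id (word_of A) = #|A|.
Proof. by rewrite count_map enumT -size_filter cardE. Qed.

Lemma word_of_exchange A (a b : 'I_n) :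
  word_of (exchange A a b) = swap (word_of A) a b.
Proof.
apply: (@eq_from_nth _ false) => [|i]; first by rewrite size_swap !size_word_of.
rewrite size_word_of => lt_in; have -> : i = Ordinal lt_in by [].
by rewrite nth_swap ?size_word_of // !nth_word_of in_exchange.
Qed.

Lemma count_nbrs_word_of A (P : pred (seq bool)) :
  count P (nbrs (word_of A)) =
  #|[set p : 'I_n * 'I_n |
      [&& p.1 \in A, p.2 \notin A & P (word_of (exchange A p.1 p.2))]]|.
Proof.
rewrite /nbrs count_flatten_pairs size_word_of; apply: eq_card => p.
by rewrite !inE !nth_word_of word_of_exchange.
Qed.

End Words.

(* Membership in the extended Hamming code, read on a 16-bit word: bit j < 15
   enters the k-th parity check iff bit k of j+1 is set, and bit 15 is the
   parity of the first fifteen bits. *)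
Definition ham_bit (k j : nat) : bool := odd (j.+1 %/ 2 ^ k).

Definition syndrome_bit (bs : seq bool) (k : nat) : bool :=
  odd (count (fun j => ham_bit k j && nth false bs j) (iota 0 15)).

Definition parity (bs : seq bool) : bool := odd (count (nth false bs) (iota 0 15)).

Definition in_code (bs : seq bool) : bool :=
  all (fun k => ~~ syndrome_bit bs k) (iota 0 4) && (nth false bs 15 == parity bs).

Lemma all_iota_ord (m : nat) (p : pred nat) : all p (iota 0 m) = [forall k : 'I_m, p k].
Proof.
apply/allP/forallP => [all_p k | all_p k].
  by apply: all_p; rewrite mem_iota add0n ltn_ord.
by rewrite mem_iota => /andP [_ lt_km]; apply: (all_p (Ordinal lt_km)).
Qed.

Section F2Arithmetic.

Local Open Scope ring_scope.

Lemma F2_bitE (x : 'F_2) : x = (x != 0)%:R.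
Proof. by case: x => [[|[|m]]] // ?; apply/val_inj. Qed.

Lemma F2_natE (m : nat) : m%:R = (odd m)%:R :> 'F_2.
Proof. by rewrite -modn2 Fp_nat_mod. Qed.

Lemma F2_sum_count (m : nat) (p : pred nat) :
  \sum_(j < m) (p j)%:R = (odd (count p (iota 0 m)))%:R :> 'F_2.
Proof.
rewrite -natr_sum F2_natE -sumn_count sumnE big_map.
by rewrite -(big_mkord xpredT (fun j => nat_of_bool (p j))) /index_iota subn0.
Qed.

End F2Arithmetic.

Section HammingBits.

Local Open Scope ring_scope.

Variable c : 'rV['F_2]_16.

Let w := word_of (supp c).
Let x : 'rV['F_2]_15 := lsubmx (c : 'rV_(15 + 1)).

Lemma nth_word_supp (i : 'I_16) : nth false w i = (c 0 i != 0).
Proof. by rewrite nth_word_of inE. Qed.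

Lemma x_bitE (j : 'I_15) : x 0 j = (nth false w j)%:R.
Proof. by rewrite mxE [LHS]F2_bitE -[j : nat]/(lshift 1 j : nat) nth_word_supp. Qed.

Lemma syndrome_bitE (k : 'I_4) : (hamH *m x^T) k 0 = (syndrome_bit w k)%:R.
Proof.
rewrite mxE -F2_sum_count; apply: eq_bigr => j _.
by rewrite [x^T _ _]mxE x_bitE /hamH mxE -natrM mulnb.
Qed.

Lemma hamming15_bits : (x \in hamming15) = all (fun k => ~~ syndrome_bit w k) (iota 0 4).
Proof.
rewrite inE all_iota_ord; apply/eqP/forallP => [H k | H].
  by have := congr1 (fun M : 'cV_4 => M k 0) H; rewrite syndrome_bitE mxE; case: syndrome_bit.
apply/matrixP => k i; rewrite ord1 syndrome_bitE mxE.
by have := H k; case: syndrome_bit.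
Qed.

Lemma parity_bits : (extend_parity x == c) = (nth false w 15 == parity w).
Proof.
have sum_x : \sum_(i < 15) x 0 i = (parity w)%:R.
  by rewrite -F2_sum_count; apply: eq_bigr => i _; rewrite x_bitE.
have c15 : rsubmx (c : 'rV_(15 + 1)) 0 0 = (nth false w 15)%:R.
  by rewrite mxE [LHS]F2_bitE -nth_word_supp.
rewrite -[X in _ == X](hsubmxK (c : 'rV_(15 + 1))) /extend_parity.
apply/eqP/eqP => [E | E].
  move: E => /(congr1 (fun M : 'rV_(15 + 1) => M 0 (rshift 15 0))).
  by rewrite !row_mxEr mxE sum_x c15; case: parity; case: nth.
suff -> : \row_(j < 1) \sum_(i < 15) x 0 i = rsubmx (c : 'rV_(15 + 1)) by [].
by apply/rowP => j; rewrite ord1 mxE sum_x c15 E.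
Qed.

Lemma ext_hamming16_bits : (c \in ext_hamming16) = in_code w.
Proof.
rewrite /in_code -hamming15_bits -parity_bits.
apply/imsetP/andP => [[y yH cE] | [xH /eqP xE]]; last by exists x.
have -> : x = y by rewrite /x cE row_mxKl.
by rewrite yH -cE.
Qed.

End HammingBits.

(* A 16-subset is the support of a codeword iff its word passes in_code
   (binary codewords are determined by their supports). *)
Lemma support_in_code (A : {set 'I_16}) :
  [exists c in ext_hamming16, supp c == A] = in_code (word_of A).
Proof.
apply/existsP/idP => [[c /andP [cC /eqP <-]] | A_code].
  by rewrite -ext_hamming16_bits.
pose c : 'rV['F_2]_16 := (\row_i (i \in A)%:R)%R.
have supp_c : supp c = A by apply/setP => i; rewrite inE mxE; case: (i \in A).
by exists c; rewrite ext_hamming16_bits supp_c A_code eqxx.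
Qed.

(* Binary tries memoise functions on words of a fixed length. *)
Inductive trie (A : Type) := Leaf of A | Node of trie A & trie A.
Arguments Leaf {A}. Arguments Node {A}.

Fixpoint build (A : Type) (f : seq bool -> A) (m : nat) : trie A :=
  if m is m'.+1 then
    Node (build (fun bs => f (true :: bs)) m') (build (fun bs => f (false :: bs)) m')
  else Leaf (f [::]).

Fixpoint lookup (A : Type) (d : A) (t : trie A) (bs : seq bool) : A :=
  match t, bs with
  | Leaf x, _ => x
  | Node t1 t2, b :: bs' => lookup d (if b then t1 else t2) bs'
  | Node _ _, [::] => d
  end.

Lemma build_lookup (A : Type) (d : A) (f : seq bool -> A) m bs :
  size bs = m -> lookup d (build f m) bs = f bs.
Proof. by elim: m f bs => [|m IH] f [|[] bs] //= [/IH ->]. Qed.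

Fixpoint checkall (m : nat) (P : seq bool -> bool) : bool :=
  if m is m'.+1 then
    checkall m' (fun bs => P (true :: bs)) && checkall m' (fun bs => P (false :: bs))
  else P [::].

Lemma checkallP m P bs : checkall m P -> size bs = m -> P bs.
Proof.
elim: m P bs => [|m IH] P [|[] bs] //= /andP [Pt Pf] [size_bs].
  exact: (IH _ _ Pt).
exact: (IH _ _ Pf).
Qed.

(* Only weight-6 words
   are ever queried, so the neighbours of other words are not explored. *)
Definition word_level (ic : seq bool -> bool) (bs : seq bool) : nat :=
  if ic bs then 0 else if count id bs != 6 then 2 else if has ic (nbrs bs) then 1 else 2.

(* word_level for the true code test, memoised over all 16-bit words; the
   inner trie memoises in_code itself. *)
Definition word_dist : seq bool -> nat :=
  lookup 2 (build (word_level (lookup false (build in_code 16))) 16).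

(* dist_table l k: neighbours at level k of a vertex at level l. *)
Definition dist_table (l k : nat) : nat :=
  match l, k with
  | 0, 1 => 60
  | 1, 0 => 4 | 1, 1 => 50 | 1, 2 => 6
  | 2, 1 => 48 | 2, 2 => 12
  | _, _ => 0
  end.

Definition table_check (dist : seq bool -> nat) : bool :=
  checkall 16 (fun bs =>
    if count id bs != 6 then true else
    let ds := map dist (nbrs bs) in
    all (fun k => count (pred1 k) ds == dist_table (dist bs) k) (iota 0 3)).

Lemma table_check_ok : table_check word_dist.
Proof. by vm_compute. Qed.

Lemma word_dist_eq0 bs : size bs = 16 -> (word_dist bs == 0) = in_code bs.
Proof.
move=> size_bs; rewrite /word_dist build_lookup // /word_level build_lookup //.
by case: in_code => //; case: ifP => // _; case: has.
Qed.

Lemma word_dist_le2 bs : size bs = 16 -> word_dist bs <= 2.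
Proof.
move=> size_bs; rewrite /word_dist build_lookup // /word_level.
by case: ifP => // _; case: ifP => // _; case: ifP.
Qed.

Lemma word_dist_table bs k : size bs = 16 -> count id bs = 6 -> k < 3 ->
  count (fun w => word_dist w == k) (nbrs bs) = dist_table (word_dist bs) k.
Proof.
move=> size_bs weight_bs lt_k3.
have := checkallP table_check_ok size_bs; rewrite weight_bs /=.
case: k lt_k3 => [|[|[|k]]] // _ /and4P [/eqP e0 /eqP e1 /eqP e2 _].
- by rewrite -e0 count_map.
- by rewrite -e1 count_map.
- by rewrite -e2 count_map.
Qed.

Definition code_dist (v : jvert 16 6) : nat := word_dist (word_of (val v)).

Lemma code_dist_eq0 v : (code_dist v == 0) = (v \in weight6_supports).
Proof. by rewrite word_dist_eq0 ?size_word_of // inE support_in_code. Qed.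

Lemma code_dist_le2 v : code_dist v <= 2.
Proof. by rewrite word_dist_le2 ?size_word_of. Qed.

Lemma code_dist_table v k :
  #|[set u | johnson_adj v u & code_dist u == k]| = dist_table (code_dist v) k.
Proof.
have [lt_k3|ge_k3] := ltnP k 3; last first.
  have -> : [set u | johnson_adj v u & code_dist u == k] = set0.
    apply/setP => u; rewrite !inE ltn_eqF ?andbF //.
    exact: leq_ltn_trans (code_dist_le2 u) ge_k3.
  by rewrite cards0; case: (code_dist v) (code_dist_le2 v) => [|[|[|]]] // _;
     case: k ge_k3 => [|[|[|]]].
rewrite (@card_johnson_nbrs 16 6 isT v (fun U => word_dist (word_of U) == k)).
rewrite -(count_nbrs_word_of _ (fun w => word_dist w == k)) word_dist_table //.
  exact: size_word_of.
by rewrite count_word_of card_jvert.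
Qed.

Lemma code_dist_nbr v k :
  0 < dist_table (code_dist v) k -> exists2 u, johnson_adj v u & code_dist u = k.
Proof.
by rewrite -code_dist_table => /card_gt0P [u]; rewrite inE => /andP [vu /eqP uk]; exists u.
Qed.

Lemma code_dist_descent v :
  0 < code_dist v -> exists2 u, johnson_adj v u & (code_dist u).+1 = code_dist v.
Proof.
move=> pos_v; have : 0 < dist_table (code_dist v) (code_dist v).-1.
  by case: (code_dist v) pos_v (code_dist_le2 v) => [|[|[|]]].
by case/code_dist_nbr => u vu du; exists u; rewrite // du prednK.
Qed.

(* A vertex at level 2 has no neighbour in the code (dist_table 2 0 = 0). *)
Lemma code_dist_lipschitz v u : johnson_adj v u -> code_dist v <= (code_dist u).+1.
Proof.
move=> vu; case: leqP => // far.
have le2 := code_dist_le2 v; have [u0 v2] : code_dist u = 0 /\ code_dist v = 2 by lia.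
suff : 0 < dist_table (code_dist v) 0 by rewrite v2.
by rewrite -code_dist_table; apply/card_gt0P; exists u; rewrite inE vu u0.
Qed.

(* All three levels occur: from any vertex, the table leads to level 1, and
   from level 1 to levels 0 and 2. *)
Lemma code_dist_onto l : l <= 2 -> exists v, code_dist v = l.
Proof.
have [v0] : exists v : jvert 16 6, true.
  have le_6_16 : 6 <= 16 by [].
  have card6 : #|[set widen_ord le_6_16 i | i in 'I_6]| == 6.
    by rewrite card_imset ?card_ord // => i j /(congr1 val) /= /val_inj.
  by exists (exist (fun A : {set 'I_16} => #|A| == 6) _ card6).
have [v1 dv1] : exists v, code_dist v = 1.
  have [dv0 | ne1] := eqVneq (code_dist v0) 1; first by exists v0.
  suff [u _ du] : exists2 u, johnson_adj v0 u & code_dist u = 1 by exists u.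
  apply: code_dist_nbr.
  by move: ne1 (code_dist_le2 v0); case: (code_dist v0) => [|[|[|]]].
case: l => [|[|[|]]] // _.
- suff [u _ du] : exists2 u, johnson_adj v1 u & code_dist u = 0 by exists u.
  by apply: code_dist_nbr; rewrite dv1.
- by exists v1.
- suff [u _ du] : exists2 u, johnson_adj v1 u & code_dist u = 2 by exists u.
  by apply: code_dist_nbr; rewrite dv1.
Qed.

Theorem corollary5p2 :
  completely_regular (@johnson_adj 16 6) weight6_supports /\
  covering_radius_is (@johnson_adj 16 6) weight6_supports 2.
Proof.
split.
- apply: (completely_regular_of_table code_dist_eq0 code_dist_descent
            code_dist_lipschitz (tab := dist_table)); last exact: code_dist_table.
  have [v dv] := @code_dist_onto 0 isT.
  by apply/set0Pn; exists v; rewrite -code_dist_eq0 dv.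
- apply: (covering_radius_of_dist code_dist_eq0 code_dist_descent code_dist_lipschitz).
    exact: code_dist_onto.
  exact: code_dist_le2.
Qed.
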